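(* Let $\Psi:\Omega_N\to\Omega_N$ be a mixed unitary channel, i.e. $\Psi(\rho)=\sum_i p_iU_i\rho U_i^\dagger$ with $U_i\in\mathrm U(N)$, $p_i\ge0$ and $\sum_ip_i=1$. Then for all $\rho^A,\rho^B\in\Omega_N$, $$T^Q(\Psi(\rho^A),\Psi(\rho^B))\le T^Q(\rho^A,\rho^B).$$
   Context: $\Omega_N$ is the set of $N\times N$ density matrices (Hermitian, positive semidefinite, trace one). Let $S$ be the swap operator on $\mathbb{C}^N\otimes\mathbb{C}^N$, and let $C^Q=\tfrac12(\mathbb{1}-S)$. Let $\Gamma^Q(\rho^A,\rho^B)$ be the set of density matrices $\rho^{AB}$ on $\mathbb{C}^N\otimes\mathbb{C}^N$ with $\operatorname{Tr}_B\rho^{AB}=\rho^A$ and $\operatorname{Tr}_A\rho^{AB}=\rho^B$. Define $$T^Q(\rho^A,\rho^B)=\min_{\rho^{AB}\in\Gamma^Q(\rho^A,\rho^B)}\operatorname{Tr}(C^Q\rho^{AB}).$$ *)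

From HB Require Import structures.
From mathcomp Require Import all_boot all_order all_algebra.
From mathcomp Require Import complex.
From mathcomp Require Import classical_sets reals.
Set Implicit Arguments. Unset Strict Implicit. Unset Printing Implicit Defensive.
Import Order.TTheory GRing.Theory Num.Theory.
Local Open Scope ring_scope.
Local Open Scope classical_set_scope.

Section QuantumOT.
Variable R : realType.
Local Notation C := R[i].

Definition adj m n (A : 'M[C]_(m, n)) : 'M[C]_(n, m) := (map_mx Num.conj A)^T.

Definition is_density N (rho : 'M[C]_N) : Prop :=
  [/\ adj rho = rho,
      (forall v : 'cV[C]_N, 0 <= (adj v *m rho *m v) 0 0)
    & \tr rho = 1].

(* C^N (x) C^N is identified with C^(N*N); the basis vector |i>|k> has
   index mxvec_index i k. *)

Definition ptraceB N (rho : 'M[C]_(N * N)) : 'M[C]_N :=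
  \matrix_(i, j) \sum_(k < N) rho (mxvec_index i k) (mxvec_index j k).
Definition ptraceA N (rho : 'M[C]_(N * N)) : 'M[C]_N :=
  \matrix_(k, l) \sum_(i < N) rho (mxvec_index i k) (mxvec_index i l).

Definition swap_op N : 'M[C]_(N * N) :=
  \sum_(i < N) \sum_(j < N) delta_mx (mxvec_index j i) (mxvec_index i j).

Definition CQ N : 'M[C]_(N * N) := 2^-1 *: (1%:M - swap_op N).

Definition couplings N (rhoA rhoB : 'M[C]_N) : set 'M[C]_(N * N) :=
  [set rhoAB | is_density rhoAB /\ ptraceB rhoAB = rhoA /\ ptraceA rhoAB = rhoB].

(* T^Q(rhoA, rhoB) = min over couplings of Tr(C^Q rhoAB); the trace is real
   for density matrices, we take its real part and the infimum (which is
   attained, so it equals the minimum of the paper). *)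
Definition TQ N (rhoA rhoB : 'M[C]_N) : R :=
  inf [set complex.Re (\tr (CQ N *m rhoAB)) | rhoAB in couplings rhoA rhoB].

Definition unitary N (U : 'M[C]_N) : Prop := U *m adj U = 1%:M.

Definition mixed_unitary N n (p : 'I_n -> R) (U : 'I_n -> 'M[C]_N)
  (rho : 'M[C]_N) : 'M[C]_N :=
  \sum_(i < n) (real_complex R (p i)) *: (U i *m rho *m adj (U i)).

End QuantumOT.

From HB Require Import structures.
From mathcomp Require Import all_boot all_order all_algebra.
From mathcomp Require Import complex mxtens spectral.
From mathcomp Require Import classical_sets reals.
Set Implicit Arguments. Unset Strict Implicit. Unset Printing Implicit Defensive.
Import Order.TTheory GRing.Theory Num.Theory.
Local Open Scope ring_scope.

(* If rho couples rhoA and rhoB, then its twirl sum_i p_i (U_i (x) U_i) rho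
   (U_i (x) U_i)^dagger couples Psi(rhoA) and Psi(rhoB): the partial traces
   turn conjugation by U_i (x) U_i into conjugation by U_i. The twirl has the
   same cost because C^Q = (1 - S)/2 commutes with every U (x) U. So every cost
   in the right-hand infimum also occurs in the left-hand one. The infima are
   comparable because the product state rhoA (x) rhoB is a coupling and all
   costs are nonnegative. *)

Lemma index_allpairs (T1 T2 : eqType) (s1 : seq T1) (s2 : seq T2) x1 x2 :
  x1 \in s1 -> x2 \in s2 ->
  index (x1, x2) [seq (y1, y2) | y1 <- s1, y2 <- s2] =
  index x1 s1 * size s2 + index x2 s2.
Proof.
move=> + x2s2; elim: s1 => //= y1 s1 IH; rewrite inE index_cat.
have [<- _|ne /IH ->] := eqVneq x1 y1.
  by rewrite (map_f (pair x1)) // index_map // => a b [].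
rewrite size_map addnA -mulSn.
by case: mapP => // -[z _ [eq1 _]]; move: ne; rewrite eq1 eqxx.
Qed.

(* The two encodings of [I_m * I_n] into [I_(m * n)], from matrix.v and
   mxtens.v, agree: both are row-major. *)
Lemma mxvec_indexE m n (i : 'I_m) (j : 'I_n) :
  mxvec_index i j = mxtens_index (i, j).
Proof.
apply: val_inj => /=.
rewrite -[LHS](@index_uniq _ (i, j) (enum_rank (i, j)) (enum {: 'I_m * 'I_n}));
  rewrite ?enum_uniq -?cardE // nth_enum_rank enumT unlock /=.
by rewrite index_allpairs ?mem_enum // !index_enum_ord size_enum_ord.
Qed.

Lemma mxtens_index_eq m n (i k : 'I_m) (j l : 'I_n) :
  (mxtens_index (i, j) == mxtens_index (k, l)) = (i == k) && (j == l).
Proof. by rewrite (can_eq (@mxtens_indexK m n)). Qed.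

Lemma big_mxtens (V : nmodType) m n (F : 'I_(m * n) -> V) :
  \sum_k F k = \sum_i \sum_j F (mxtens_index (i, j)).
Proof.
rewrite pair_big (reindex (@mxtens_index m n)) /=; last first.
  by apply: onW_bij; exists (@mxtens_unindex m n);
    [exact: mxtens_indexK | exact: mxtens_unindexK].
by apply: eq_bigr => -[].
Qed.

Lemma sum_delta_mul (R : pzSemiRingType) (I : finType) (i : I) (F : I -> R) :
  \sum_j (i == j)%:R * F j = F i.
Proof.
rewrite (bigD1 i) //= eqxx mul1r big1 ?addr0 // => j.
by rewrite eq_sym => /negbTE ->; rewrite mul0r.
Qed.

Section TensorProduct.
Variable R : comPzRingType.

Lemma tensmx11 m n : (1%:M : 'M[R]_m) *t (1%:M : 'M[R]_n) = 1%:M.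
Proof.
apply/matrixP => x y.
case: (mxtens_indexP x) => i j; case: (mxtens_indexP y) => k l.
by rewrite tensmxE !mxE mxtens_index_eq -mulnb natrM.
Qed.

Lemma mul_tensmxE m n p q r (A : 'M[R]_(m, n)) (B : 'M[R]_(p, q))
    (M : 'M[R]_(n * q, r)) i k y :
  ((A *t B) *m M) (mxtens_index (i, k)) y =
  \sum_a \sum_b A i a * B k b * M (mxtens_index (a, b)) y.
Proof.
by rewrite mxE big_mxtens; apply: eq_bigr => a _; apply: eq_bigr => b _;
  rewrite tensmxE.
Qed.

Lemma mul_tensmx1E m n p r (A : 'M[R]_(m, n)) (M : 'M[R]_(n * p, r)) i k y :
  ((A *t 1%:M) *m M) (mxtens_index (i, k)) y =
  \sum_a A i a * M (mxtens_index (a, k)) y.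
Proof.
rewrite mul_tensmxE; apply: eq_bigr => a _.
by under eq_bigr do rewrite mxE -mulrA mulrCA; rewrite sum_delta_mul.
Qed.

Lemma mul_tens1mxE m n p r (B : 'M[R]_(n, p)) (M : 'M[R]_(m * p, r)) i k y :
  ((1%:M *t B) *m M) (mxtens_index (i, k)) y =
  \sum_b B k b * M (mxtens_index (i, b)) y.
Proof.
rewrite mul_tensmxE exchange_big /=; apply: eq_bigr => b _.
by under eq_bigr do rewrite mxE -mulrA; rewrite sum_delta_mul.
Qed.

End TensorProduct.

Section PositiveMatrices.
Variable R : realType.
Local Notation C := R[i].

Lemma adjM m n p (A : 'M[C]_(m, n)) (B : 'M[C]_(n, p)) :
  adj (A *m B) = adj B *m adj A.
Proof. by rewrite /adj map_mxM trmx_mul. Qed.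

Lemma adjK m n (A : 'M[C]_(m, n)) : adj (adj A) = A.
Proof. by apply/matrixP => i j; rewrite !mxE conjCK. Qed.

Lemma adj1 n : adj (1%:M : 'M[C]_n) = 1%:M.
Proof. by rewrite /adj map_mx1 trmx1. Qed.

Lemma adjB m n (A B : 'M[C]_(m, n)) : adj (A - B) = adj A - adj B.
Proof. by rewrite /adj !raddfB. Qed.

Lemma adjZ m n (a : C) (A : 'M[C]_(m, n)) : adj (a *: A) = a^* *: adj A.
Proof. by apply/matrixP => i j; rewrite !mxE rmorphM. Qed.

Lemma adj_sum m n I (r : seq I) (P : pred I) (F : I -> 'M[C]_(m, n)) :
  adj (\sum_(i <- r | P i) F i) = \sum_(i <- r | P i) adj (F i).
Proof. by rewrite /adj !raddf_sum. Qed.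

Lemma adj_tens m n p q (A : 'M[C]_(m, n)) (B : 'M[C]_(p, q)) :
  adj (A *t B) = adj A *t adj B.
Proof. by rewrite /adj map_mxT trmx_tens. Qed.

Lemma adj_trC m n (A : 'M[C]_(m, n)) : map_mx Num.conj A^T = adj A.
Proof. by rewrite /adj map_trmx. Qed.

Definition psdmx n (A : 'M[C]_n) :=
  forall v : 'cV[C]_n, 0 <= (adj v *m A *m v) 0 0.

Lemma psdmx_diag_ge0 n (A : 'M[C]_n) k : psdmx A -> 0 <= A k k.
Proof.
have adj_e : adj (delta_mx k 0 : 'cV[C]_n) = delta_mx 0 k.
  by apply/matrixP => i j; rewrite !mxE rmorph_nat andbC.
by move=> /(_ (delta_mx k 0)); rewrite adj_e -rowE -colE !mxE.
Qed.

Lemma mxtrace_psd_ge0 n (A : 'M[C]_n) : psdmx A -> 0 <= \tr A.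
Proof. by move=> psdA; apply: sumr_ge0 => k _; apply: psdmx_diag_ge0. Qed.

Lemma psdmx_conj m n (X : 'M[C]_(m, n)) (A : 'M[C]_n) :
  psdmx A -> psdmx (X *m A *m adj X).
Proof.
move=> psdA v.
have -> : adj v *m (X *m A *m adj X) *m v = adj (adj X *m v) *m A *m (adj X *m v).
  by rewrite adjM adjK !mulmxA.
exact: psdA.
Qed.

Lemma psdmx_mul_adj m n (X : 'M[C]_(m, n)) : psdmx (X *m adj X).
Proof.
have psd1 : psdmx (1%:M : 'M[C]_n).
  by move=> v; rewrite mulmx1 mxE; apply: sumr_ge0 => j _;
    rewrite !mxE mulrC mul_conjC_ge0.
by have := psdmx_conj X psd1; rewrite mulmx1.
Qed.

(* Diagonalize in an orthonormal basis and take square roots of the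
   eigenvalues, which are nonnegative. *)
Lemma psdmx_factor n (A : 'M[C]_n) :
  adj A = A -> psdmx A -> exists X : 'M[C]_n, A = X *m adj X.
Proof.
move=> hermA psdA; set Q := spectralmx A; set d := spectral_diag A.
have unitQ : Q *m adj Q = 1%:M.
  by rewrite -adj_trC; apply/unitarymxP/spectral_unitarymx.
have A_eq : A = adj Q *m diag_mx d *m Q.
  rewrite -adj_trC -invmx_unitary ?spectral_unitarymx //.
  by apply/orthomx_spectralP/normalmxP; rewrite adj_trC hermA.
have d_ge0 l : 0 <= d 0 l.
  have := psdmx_diag_ge0 l (psdmx_conj Q psdA).
  by rewrite A_eq !mulmxA unitQ mul1mx -mulmxA unitQ mulmx1 mxE eqxx.
pose s := \row_l sqrtC (d 0 l).
have sqrt_d : diag_mx s *m adj (diag_mx s) = diag_mx d.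
  rewrite -adj_trC tr_diag_mx map_diag_mx mulmx_diag; congr diag_mx.
  by apply/rowP => l; rewrite !mxE /= geC0_conj ?sqrtC_ge0 // -expr2 sqrtCK.
exists (adj Q *m diag_mx s).
by rewrite adjM adjK mulmxA -[adj Q *m _ *m _]mulmxA sqrt_d.
Qed.

Lemma psdmx_tens m n (A : 'M[C]_m) (B : 'M[C]_n) :
  adj A = A -> psdmx A -> adj B = B -> psdmx B -> psdmx (A *t B).
Proof.
move=> /psdmx_factor/[apply] -[X ->] /psdmx_factor/[apply] -[Y ->].
by rewrite -tensmx_mul -adj_tens; apply: psdmx_mul_adj.
Qed.

Lemma mxtrace_tens m n (A : 'M[C]_m) (B : 'M[C]_n) : \tr (A *t B) = \tr A * \tr B.
Proof. by rewrite /mxtrace mulr_sum; apply: eq_bigr => k _; rewrite mxE. Qed.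

Lemma density_tens m n (A : 'M[C]_m) (B : 'M[C]_n) :
  is_density A -> is_density B -> is_density (A *t B).
Proof.
case=> hA pA tA [hB pB tB]; split; first by rewrite adj_tens hA hB.
  exact: psdmx_tens.
by rewrite mxtrace_tens tA tB mulr1.
Qed.

Lemma unitary_adj_mul n (U : 'M[C]_n) : unitary U -> adj U *m U = 1%:M.
Proof. exact: mulmx1C. Qed.

Lemma unitary_tens m n (U : 'M[C]_m) (V : 'M[C]_n) :
  unitary U -> unitary V -> unitary (U *t V).
Proof. by move=> uU uV; rewrite /unitary adj_tens tensmx_mul uU uV tensmx11. Qed.

Lemma density_mixed_unitary N n (p : 'I_n -> R) (U : 'I_n -> 'M[C]_N) rho :
  (forall i, 0 <= p i) -> \sum_i p i = 1 -> (forall i, unitary (U i)) ->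
  is_density rho -> is_density (mixed_unitary p U rho).
Proof.
move=> p_ge0 p_sum1 U_unitary [h_rho psd_rho tr_rho]; split.
- rewrite adj_sum; apply: eq_bigr => i _.
  by rewrite adjZ !adjM adjK h_rho mulmxA /= [Num.conj _]conjc_real.
- move=> v; rewrite mulmx_sumr mulmx_suml summxE; apply: sumr_ge0 => i _.
  rewrite -scalemxAr -scalemxAl mxE; apply: mulr_ge0; first by rewrite ler0c.
  exact: psdmx_conj.
- rewrite linear_sum -(rmorph1 (real_complex R)) -p_sum1 rmorph_sum /=.
  apply: eq_bigr => i _; rewrite linearZ /= mxtrace_mulC mulmxA.
  by rewrite unitary_adj_mul // mul1mx tr_rho mulr1.
Qed.

End PositiveMatrices.

Section Bipartite.
Variable R : realType.
Local Notation C := R[i].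
Variable N : nat.
Local Notation S := (swap_op R N).

Lemma swap_opE a b c d :
  S (mxtens_index (a, b)) (mxtens_index (c, d)) = ((a == d) && (b == c))%:R.
Proof.
rewrite summxE; under eq_bigr do rewrite summxE.
under eq_bigr do under eq_bigr do rewrite mxE !mxvec_indexE !mxtens_index_eq.
under eq_bigr do under eq_bigr do rewrite -andbA andbCA -mulnb natrM -mulnb natrM.
under eq_bigr do rewrite -big_distrr /= sum_delta_mul.
by rewrite sum_delta_mul andbC eq_sym [c == b]eq_sym.
Qed.

Lemma mul_swap_opE (M : 'M[C]_(N * N)) a b y :
  (S *m M) (mxtens_index (a, b)) y = M (mxtens_index (b, a)) y.
Proof.
rewrite mxE big_mxtens; under eq_bigr do under eq_bigr do
  rewrite swap_opE -mulnb natrM -mulrA.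
by under eq_bigr do rewrite sum_delta_mul; rewrite sum_delta_mul.
Qed.

Lemma tr_swap_op : S^T = S.
Proof.
apply/matrixP => x y.
case: (mxtens_indexP x) => a b; case: (mxtens_indexP y) => c d.
by rewrite mxE !swap_opE andbC eq_sym [b == c]eq_sym.
Qed.

Lemma mulmx_swap_opE (M : 'M[C]_(N * N)) x a b :
  (M *m S) x (mxtens_index (a, b)) = M x (mxtens_index (b, a)).
Proof. by rewrite -[M *m S]trmxK trmx_mul tr_swap_op mxE mul_swap_opE mxE. Qed.

Lemma adj_swap_op : adj S = S.
Proof.
apply/matrixP => x y.
case: (mxtens_indexP x) => a b; case: (mxtens_indexP y) => c d.
by rewrite /adj map_trmx tr_swap_op mxE swap_opE rmorph_nat.
Qed.

Lemma swap_opK : S *m S = 1%:M.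
Proof.
apply/matrixP => x y.
case: (mxtens_indexP x) => a b; case: (mxtens_indexP y) => c d.
by rewrite mul_swap_opE swap_opE !mxE mxtens_index_eq andbC.
Qed.

Lemma swap_op_tens (A B : 'M[C]_N) : S *m (A *t B) = (B *t A) *m S.
Proof.
apply/matrixP => x y.
case: (mxtens_indexP x) => a b; case: (mxtens_indexP y) => c d.
by rewrite mul_swap_opE mulmx_swap_opE !tensmxE mulrC.
Qed.

Lemma ptraceBE (M : 'M[C]_(N * N)) i j :
  ptraceB M i j = \sum_k M (mxtens_index (i, k)) (mxtens_index (j, k)).
Proof. by rewrite mxE; apply: eq_bigr => k _; rewrite !mxvec_indexE. Qed.

Lemma ptraceA_swap (M : 'M[C]_(N * N)) : ptraceA M = ptraceB (S *m M *m S).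
Proof.
apply/matrixP => k l; rewrite ptraceBE mxE.
by apply: eq_bigr => i _; rewrite mulmx_swap_opE mul_swap_opE !mxvec_indexE.
Qed.

Fact ptraceB_is_semilinear : semilinear (@ptraceB R N).
Proof.
split=> [a M|M M']; apply/matrixP => i j; rewrite !mxE;
  [rewrite big_distrr | rewrite -big_split];
  by apply: eq_bigr => k _; rewrite !mxE.
Qed.
HB.instance Definition _ :=
  GRing.isSemilinear.Build C 'M[C]_(N * N) 'M[C]_N _ (@ptraceB R N)
    ptraceB_is_semilinear.

Fact ptraceA_is_semilinear : semilinear (@ptraceA R N).
Proof.
split=> [a M|M M']; apply/matrixP => i j; rewrite !mxE;
  [rewrite big_distrr | rewrite -big_split];
  by apply: eq_bigr => k _; rewrite !mxE.
Qed.
HB.instance Definition _ :=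
  GRing.isSemilinear.Build C 'M[C]_(N * N) 'M[C]_N _ (@ptraceA R N)
    ptraceA_is_semilinear.

Lemma ptraceB_tr (M : 'M[C]_(N * N)) : ptraceB M^T = (ptraceB M)^T.
Proof.
by apply/matrixP => i j; rewrite !mxE; apply: eq_bigr => k _; rewrite mxE.
Qed.

Lemma ptraceB_tensmx1_mul (A : 'M[C]_N) M :
  ptraceB ((A *t 1%:M) *m M) = A *m ptraceB M.
Proof.
apply/matrixP => i j; rewrite ptraceBE mxE.
under eq_bigr do rewrite mul_tensmx1E.
by rewrite exchange_big; apply: eq_bigr => a _; rewrite ptraceBE big_distrr.
Qed.

Lemma ptraceB_mul_tensmx1 (A : 'M[C]_N) M :
  ptraceB (M *m (A *t 1%:M)) = ptraceB M *m A.
Proof.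
rewrite -[M *m _]trmxK trmx_mul trmx_tens trmx1 ptraceB_tr ptraceB_tensmx1_mul.
by rewrite ptraceB_tr trmx_mul !trmxK.
Qed.

Lemma ptraceB_tens1mx_mulC (B : 'M[C]_N) M :
  ptraceB ((1%:M *t B) *m M) = ptraceB (M *m (1%:M *t B)).
Proof.
apply/matrixP => i j; rewrite !ptraceBE.
under eq_bigr do rewrite mul_tens1mxE.
under [RHS]eq_bigr do
  rewrite -[M *m _]trmxK trmx_mul trmx_tens trmx1 mxE mul_tens1mxE.
rewrite exchange_big; apply: eq_bigr => k _.
by apply: eq_bigr => b _; rewrite !mxE mulrC.
Qed.

Lemma ptraceB_conj_tens (A A' B B' : 'M[C]_N) M : B' *m B = 1%:M ->
  ptraceB ((A *t B) *m M *m (A' *t B')) = A *m ptraceB M *m A'.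
Proof.
move=> BB'; rewrite (tensmx_decr A) (tensmx_decl A') !mulmxA ptraceB_mul_tensmx1.
rewrite -!mulmxA ptraceB_tensmx1_mul ptraceB_tens1mx_mulC -[M *m _ *m _]mulmxA.
by rewrite tensmx_mul mul1mx BB' tensmx11 mulmx1 mulmxA.
Qed.

Lemma ptraceA_conj_tens (A A' B B' : 'M[C]_N) M : A' *m A = 1%:M ->
  ptraceA ((A *t B) *m M *m (A' *t B')) = B *m ptraceA M *m B'.
Proof.
move=> AA'; rewrite !ptraceA_swap -(ptraceB_conj_tens B B' _ AA').
by rewrite !mulmxA swap_op_tens -!mulmxA swap_op_tens.
Qed.

Lemma ptraceB_tens (A B : 'M[C]_N) : ptraceB (A *t B) = \tr B *: A.
Proof.
apply/matrixP => i j; rewrite ptraceBE !mxE mulrC big_distrr.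
by apply: eq_bigr => k _; rewrite tensmxE.
Qed.

Lemma ptraceA_tens (A B : 'M[C]_N) : ptraceA (A *t B) = \tr A *: B.
Proof.
by rewrite ptraceA_swap swap_op_tens -mulmxA swap_opK mulmx1 ptraceB_tens.
Qed.

Lemma adj_CQ : adj (CQ R N) = CQ R N.
Proof. by rewrite /CQ adjZ adjB adj1 adj_swap_op fmorphV rmorph_nat. Qed.

Lemma CQ_idem : CQ R N *m CQ R N = CQ R N.
Proof.
have sq : (1%:M - S) *m (1%:M - S) = 2%:R *: (1%:M - S).
  by rewrite mulmxBl !mulmxBr !mul1mx mulmx1 swap_opK opprB scaler_nat mulr2n.
by rewrite /CQ -scalemxAl -scalemxAr sq !scalerA divfK // pnatr_eq0.
Qed.

(* [C^Q] is an orthogonal projection, so [tr (C^Q M) = tr (C^Q M C^Q)]. *)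
Lemma mxtrace_CQ_ge0 M : psdmx M -> 0 <= \tr (CQ R N *m M).
Proof.
move=> /(psdmx_conj (CQ R N)) /mxtrace_psd_ge0.
by rewrite adj_CQ -mulmxA mxtrace_mulC -mulmxA CQ_idem mxtrace_mulC.
Qed.

Lemma CQ_tens_comm (U : 'M[C]_N) : CQ R N *m (U *t U) = (U *t U) *m CQ R N.
Proof.
by rewrite /CQ -scalemxAl -scalemxAr mulmxBl mulmxBr mul1mx mulmx1 swap_op_tens.
Qed.

Lemma mxtrace_CQ_conj_tens (U : 'M[C]_N) M : unitary U ->
  \tr (CQ R N *m ((U *t U) *m M *m adj (U *t U))) = \tr (CQ R N *m M).
Proof.
move=> uU; rewrite !mulmxA mxtrace_mulC !mulmxA -[adj _ *m _ *m _]mulmxA.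
by rewrite CQ_tens_comm mulmxA unitary_adj_mul ?mul1mx //; apply: unitary_tens.
Qed.

Section Twirl.
Variables (n : nat) (p : 'I_n -> R) (U : 'I_n -> 'M[C]_N).
Hypotheses (p_ge0 : forall i, 0 <= p i) (p_sum1 : \sum_i p i = 1).
Hypothesis U_unitary : forall i, unitary (U i).

Local Notation twirl := (mixed_unitary p (fun i => U i *t U i)).

Lemma ptraceB_twirl M : ptraceB (twirl M) = mixed_unitary p U (ptraceB M).
Proof.
rewrite linear_sum; apply: eq_bigr => i _.
by rewrite linearZ /= adj_tens ptraceB_conj_tens // unitary_adj_mul.
Qed.

Lemma ptraceA_twirl M : ptraceA (twirl M) = mixed_unitary p U (ptraceA M).
Proof.
rewrite linear_sum; apply: eq_bigr => i _.
by rewrite linearZ /= adj_tens ptraceA_conj_tens // unitary_adj_mul.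
Qed.

Lemma mxtrace_CQ_twirl M : \tr (CQ R N *m twirl M) = \tr (CQ R N *m M).
Proof.
rewrite mulmx_sumr linear_sum /=.
under eq_bigr do rewrite -scalemxAr linearZ /= mxtrace_CQ_conj_tens //.
by rewrite -big_distrl /= -rmorph_sum p_sum1 rmorph1 mul1r.
Qed.

Lemma couplings_twirl rhoA rhoB rho : couplings rhoA rhoB rho ->
  couplings (mixed_unitary p U rhoA) (mixed_unitary p U rhoB) (twirl rho).
Proof.
move=> [rho_density [<- <-]]; split; last by rewrite ptraceB_twirl ptraceA_twirl.
by apply: density_mixed_unitary => // i; apply: unitary_tens.
Qed.

End Twirl.

Lemma couplings_tens (rhoA rhoB : 'M[C]_N) :
  is_density rhoA -> is_density rhoB -> couplings rhoA rhoB (rhoA *t rhoB).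
Proof.
move=> dA dB; split; first exact: density_tens.
case: dA dB => _ _ trA [_ _ trB].
by rewrite ptraceB_tens ptraceA_tens trA trB !scale1r.
Qed.

Lemma Re_mxtrace_CQ_ge0 rho :
  is_density rho -> 0 <= complex.Re (\tr (CQ R N *m rho)).
Proof. by case=> _ /mxtrace_CQ_ge0 + _; rewrite lecE => /andP[]. Qed.

End Bipartite.

Theorem proposition4p1 (R : realType) (N n : nat)
  (p : 'I_n -> R) (U : 'I_n -> 'M[R[i]]_N)
  (hp : forall i, 0 <= p i) (hsum : \sum_(i < n) p i = 1)
  (hU : forall i, unitary (U i))
  (rhoA rhoB : 'M[R[i]]_N)
  (hA : is_density rhoA) (hB : is_density rhoB) :
  TQ (mixed_unitary p U rhoA) (mixed_unitary p U rhoB) <= TQ rhoA rhoB.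
Proof.
apply: lb_le_inf.
  exists (complex.Re (\tr (CQ R N *m (rhoA *t rhoB)))).
  by exists (rhoA *t rhoB) => //; apply: couplings_tens.
move=> _ [rho rho_coupling <-].
rewrite -(mxtrace_CQ_twirl hsum hU).
apply: ge_inf.
  by exists 0 => _ [sigma [sigma_density _] <-]; apply: Re_mxtrace_CQ_ge0.
exists (mixed_unitary p (fun i => U i *t U i) rho) => //.
exact: couplings_twirl.
Qed.
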